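(* Let $\mathcal K$ be an abstract Krivine structure and $\mathcal A_{\mathcal K\bullet}=(\mathcal P_\bullet(\Pi),\circ_\bullet,\to_\bullet,\supseteq,\mathsf k_\bullet,\mathsf s_\bullet,\Phi)$ the associated full adjunction implicative ordered combinatory algebra. Then the indexed preorders $\mathbf P_\bullet(\mathcal K)$ and $\mathbf P(\mathcal A_{\mathcal K\bullet})$ are isomorphic; namely, for every set $I$ and all $\varphi,\psi:I\to\mathcal P_\bullet(\Pi)$: there is $t\in\mathrm{QP}$ with $t\perp\varphi(i)\to_\bullet\psi(i)$ for all $i\in I$ if and only if there is $r\in\Phi$ with $r\circ_\bullet\varphi(i)\supseteq\psi(i)$ for all $i\in I$.
   Context: An abstract Krivine structure $\mathcal K$ consists of sets $\Lambda,\Pi$, a relation $\perp\subseteq\Lambda\times\Pi$ ($t\perp P$ means $t\perp\pi$ for all $\pi\in P$), a map $\mathrm{push}$ written $t\cdot\pi$ (associating to the right), an application $ts$ on $\Lambda$ (associating to the left), a subset $\mathrm{QP}\subseteq\Lambda$ closed under application, and $\mathsf K,\mathsf S\in\mathrm{QP}$ with: $t\perp s\cdot\pi\Rightarrow ts\perp\pi$; $t\perp\pi\Rightarrow\mathsf K\perp t\cdot s\cdot\pi$; $tu(su)\perp\pi\Rightarrow\mathsf S\perp t\cdot s\cdot u\cdot\pi$. Polars: $L^\perp=\{\pi:\forall t\in L,\ t\perp\pi\}$, ${}^\perp P=\{t:\forall\pi\in P,\ t\perp\pi\}$; $\overline P=({}^\perp P)^\perp$; $\widehat P=\bigcup_{\pi\in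 P}\overline{\{\pi\}}$; $\mathcal P_\bullet(\Pi)=\{P:\widehat P=P\}$. $P\to_\bullet Q=\widehat{\{t\cdot\pi:t\in{}^\perp P,\pi\in Q\}}$; $P\circ_\bullet Q=\{\pi:t\cdot\pi'\in P\ \forall t\in{}^\perp Q,\ \pi'\in\overline{\{\pi\}}\}$; $\mathsf E=\mathsf S(\mathsf K(\mathsf S\mathsf K\mathsf K))$, $\mathsf B=\mathsf S(\mathsf K\mathsf S)\mathsf K$, $\mathsf k_\bullet=\{\mathsf E\mathsf K\}^\perp$, $\mathsf s_\bullet=\{\mathsf E((\mathsf B\mathsf E)\mathsf S)\}^\perp$, $\Phi=\{P\in\mathcal P_\bullet(\Pi):\exists t\in\mathrm{QP},\ t\perp P\}$. $\mathbf P_\bullet(\mathcal K)$ is the functor $\mathbf{Set}^{op}\to\mathbf{Ord}$, $I\mapsto(\mathcal P_\bullet(\Pi)^I,\vdash)$ with $\varphi\vdash\psi$ iff $\exists t\in\mathrm{QP}\ \forall i,\ t\perp\varphi(i)\to_\bullet\psi(i)$, and $f\mapsto(\varphi\mapsto\varphi\circ f)$. For an ordered combinatory algebra $\mathcal A$ with carrier $A$, order $\le$ and filter $\Phi$, $\mathbf P(\mathcal A)$ is $I\mapsto(A^I,\vdash)$ with $\varphi\vdash\psi$ iff $\exists r\in\Phi\ \forall i,\ r\varphi(i)\le\psi(i)$, and $f\mapsto(\varphi\mapsto\varphi\circ f)$; for $\mathcal A_{\mathcal K\bullet}$, $\le$ is $\supseteq$ and application is $\circ_\bullet$. *)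

Set Implicit Arguments.

Record AKS := {
  Lam : Type;
  Pi : Type;
  perp : Lam -> Pi -> Prop;
  push : Lam -> Pi -> Pi;
  app : Lam -> Lam -> Lam;
  QP : Lam -> Prop;
  QP_app : forall t s, QP t -> QP s -> QP (app t s);
  kK : Lam;
  kS : Lam;
  QP_K : QP kK;
  QP_S : QP kS;
  ax_app : forall t s pi, perp t (push s pi) -> perp (app t s) pi;
  ax_K : forall t s pi, perp t pi -> perp kK (push t (push s pi));
  ax_S : forall t s u pi, perp (app (app t u) (app s u)) pi ->
           perp kS (push t (push s (push u pi)))
}.

Section Bullet.
Context {K : AKS}.

Definition perp_set (t : Lam K) (P : Pi K -> Prop) : Prop :=
  forall pi, P pi -> perp K t pi.

Definition rpol (L : Lam K -> Prop) : Pi K -> Prop :=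
  fun pi => forall t, L t -> perp K t pi.

Definition lpol (P : Pi K -> Prop) : Lam K -> Prop :=
  fun t => forall pi, P pi -> perp K t pi.

Definition clos (P : Pi K -> Prop) : Pi K -> Prop := rpol (lpol P).

Definition single (pi0 : Pi K) : Pi K -> Prop := fun pi => pi = pi0.

Definition hat (P : Pi K -> Prop) : Pi K -> Prop :=
  fun pi => exists pi0, P pi0 /\ clos (single pi0) pi.

Definition PB (P : Pi K -> Prop) : Prop := forall pi, hat P pi <-> P pi.

Definition arrB (P Q : Pi K -> Prop) : Pi K -> Prop :=
  hat (fun pi => exists t pi', lpol P t /\ Q pi' /\ pi = push K t pi').

Definition appB (P Q : Pi K -> Prop) : Pi K -> Prop :=
  fun pi => forall t pi', lpol Q t -> clos (single pi) pi' -> P (push K t pi').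

Definition PhiB (P : Pi K -> Prop) : Prop :=
  PB P /\ exists t, QP K t /\ perp_set t P.

End Bullet.


Set Implicit Arguments.
Unset Strict Implicit.

(* The realizers of [P ->• Q] are exactly the terms orthogonal to every [s . pi']
   with [s ⊥ P] and [pi' ∈ Q], since [hat] does not change orthogonality.
   Hence a uniform realizer [t] of [phi i ->• psi i] gives the element
   [{t}^⊥] of [Phi], and [{t}^⊥ ∘• phi i ⊇ psi i] because [psi i] is closed
   under [hat]; conversely a realizer [u] of [r ∈ Phi] realizes every
   [phi i ->• psi i] as soon as [r ∘• phi i ⊇ psi i]. *)

Section BulletRealizability.
Context {K : AKS}.

Lemma clos_single_refl (pi : Pi K) : clos (single pi) pi.
Proof. intros t Ht. now apply Ht. Qed.

Lemma hat_incl (P : Pi K -> Prop) (pi : Pi K) : P pi -> hat P pi.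
Proof. intros Hpi. exists pi. split; [exact Hpi | apply clos_single_refl]. Qed.

Lemma perp_clos_single (t : Lam K) (pi0 pi : Pi K) :
  perp K t pi0 -> clos (single pi0) pi -> perp K t pi.
Proof. intros Ht Hc. apply Hc. intros pi1 E. now rewrite E. Qed.

Lemma perp_set_hat (t : Lam K) (P : Pi K -> Prop) :
  perp_set t P -> perp_set t (hat P).
Proof.
  intros Ht pi [pi0 [Hpi0 Hc]]. exact (perp_clos_single (Ht pi0 Hpi0) Hc).
Qed.

Lemma PB_clos_single (P : Pi K -> Prop) (pi pi' : Pi K) :
  PB P -> P pi -> clos (single pi) pi' -> P pi'.
Proof. intros HP Hpi Hc. apply HP. now exists pi. Qed.

Lemma PB_rpol (L : Lam K -> Prop) : PB (rpol L).
Proof.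
  intros pi. split.
  - intros [pi0 [Hpi0 Hc]] t Ht. exact (perp_clos_single (Hpi0 t Ht) Hc).
  - apply hat_incl.
Qed.

Lemma PhiB_rpol_eq (t : Lam K) : QP K t -> PhiB (rpol (eq t)).
Proof.
  intros Qt. split; [apply PB_rpol |].
  exists t. split; [exact Qt |]. intros pi Hpi. now apply Hpi.
Qed.

Lemma arrB_push (P Q : Pi K -> Prop) (s : Lam K) (pi : Pi K) :
  lpol P s -> Q pi -> arrB P Q (push K s pi).
Proof. intros Hs Hpi. apply hat_incl. now exists s, pi. Qed.

Lemma perp_set_arrB (t : Lam K) (P Q : Pi K -> Prop) :
  (forall s pi, lpol P s -> Q pi -> perp K t (push K s pi)) ->
  perp_set t (arrB P Q).
Proof.
  intros Ht. apply perp_set_hat. intros pi [s [pi' [Hs [Hpi' E]]]].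
  rewrite E. now apply Ht.
Qed.

Lemma appB_rpol_eq_of_perp_arrB (t : Lam K) (P Q : Pi K -> Prop) (pi : Pi K) :
  PB Q -> perp_set t (arrB P Q) -> Q pi -> appB (rpol (eq t)) P pi.
Proof.
  intros HQ Ht Hpi s pi' Hs Hc t' <-.
  apply Ht, arrB_push; [exact Hs |]. exact (PB_clos_single HQ Hpi Hc).
Qed.

Lemma perp_arrB_of_appB (u : Lam K) (r P Q : Pi K -> Prop) :
  perp_set u r -> (forall pi, Q pi -> appB r P pi) -> perp_set u (arrB P Q).
Proof.
  intros Hu Hr. apply perp_set_arrB. intros s pi Hs Hpi.
  apply Hu, (Hr pi Hpi s pi Hs), clos_single_refl.
Qed.

End BulletRealizability.

Theorem mainTheorem16 (K : AKS) (I : Type) (phi psi : I -> Pi K -> Prop) :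
  (forall i, PB (phi i)) -> (forall i, PB (psi i)) ->
  ((exists t, QP K t /\ forall i, perp_set t (arrB (phi i) (psi i)))
   <->
   (exists r, PhiB r /\ forall i pi, psi i pi -> appB r (phi i) pi)).
Proof.
  intros _ Hpsi. split.
  - intros [t [Qt Ht]]. exists (rpol (eq t)). split.
    + now apply PhiB_rpol_eq.
    + intros i pi. now apply appB_rpol_eq_of_perp_arrB.
  - intros [r [[_ [u [Qu Hu]]] Hr]]. exists u. split; [exact Qu |].
    intros i. exact (perp_arrB_of_appB Hu (Hr i)).
Qed.
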